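(* Let $Q$ be a square-free word of length $n\geq 2$. Then for every position $p\in\{1,\dots,n\}$, the number of factors of $Q$ that are almost-squares and start at the $p$-th letter of $Q$ is less than $2\log_{5/4} n$.
   Context: Words are finite sequences of letters. A factor of $Q$ is a contiguous subword; factors starting at the same position are distinguished by their lengths. An extension of a word $W$ over an alphabet $\mathbb{A}$ is a word $W_1xW_2$ with $W=W_1W_2$ ($W_1,W_2$ possibly empty) and $x\in\mathbb{A}$. An almost-square is a word of the form $WW'$ where $W'$ is either an extension of $W$ or is obtained by deleting one letter from $W$. A square is a nonempty word of the form $YY$; a word is square-free if none of its factors is a square. *)

From mathcomp Require Import all_boot.
From Stdlib Require Import Reals.
Set Implicit Arguments. Unset Strict Implicit.

Definition extension (T : Type) (W W' : seq T) : Prop :=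
  exists (W1 W2 : seq T) (x : T), W = W1 ++ W2 /\ W' = W1 ++ x :: W2.

Definition deletion (T : Type) (W W' : seq T) : Prop :=
  exists (W1 W2 : seq T) (x : T), W = W1 ++ x :: W2 /\ W' = W1 ++ W2.

Definition almost_square (T : Type) (u : seq T) : Prop :=
  exists W W' : seq T, u = W ++ W' /\ (extension W W' \/ deletion W W').

Definition square_free (T : Type) (Q : seq T) : Prop :=
  forall (u Y w : seq T), Q = u ++ Y ++ Y ++ w -> Y = [::].

(* The factor of Q starting at the p-th letter (1-indexed) of length l;
   it exists iff p - 1 + l <= size Q. *)
Definition factor_at (T : Type) (Q : seq T) (p l : nat) : seq T :=
  take l (drop p.-1 Q).

(* An almost-square factor of length 2h+1 starting at a given position makes the
   word agree with its shift by h or h+1 on the first h letters, except at the one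
   inserted or deleted letter.  If two such factors have half-lengths a + 2 <= b and
   3(b - a + 1) <= a, some window of length b - a + 1 among the first a letters avoids
   both exceptions and so carries a shift in {a, a+1} and one in {b, b+1}; their
   difference is a period producing a square.  Hence every second half-length grows
   by a factor 5/4, and k almost-squares in a word of length n force (5/4)^k < n^2. *)

From mathcomp Require Import all_boot.
From Stdlib Require Import Reals Lra.
(* Reals rebinds [^] on nat to [Nat.pow]; re-importing ssrnat restores [expn]. *)
From mathcomp Require Import ssrnat zify.

Set Implicit Arguments.
Unset Strict Implicit.

Lemma window_avoiding_two_points D a s1 s2 :
  3 * D <= a ->
  exists i, [/\ i + D <= a, i + D <= s1 \/ s1 < i & i + D <= s2 \/ s2 < i].
Proof.
move=> hD; case: (ltnP s1 D) => h1; case: (ltnP s2 D) => h2.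
- by exists D; split; lia.
- by case: (ltnP s2 (2 * D)) => h2'; [exists (2 * D) | exists D]; split; lia.
- by case: (ltnP s1 (2 * D)) => h1'; [exists (2 * D) | exists D]; split; lia.
- by exists 0; split; lia.
Qed.

Section Periodicity.

Variables (T : eqType) (x0 : T).

Definition periodic_on (w : seq T) (t i j : nat) : Prop :=
  forall k, i <= k < j -> nth x0 w k = nth x0 w (k + t).

Lemma periodic_on_sub (w : seq T) t i j i' j' :
  i <= i' -> j' <= j -> periodic_on w t i j -> periodic_on w t i' j'.
Proof. by move=> hi hj per k hk; apply: per; lia. Qed.

Lemma nth_cat_size (p s : seq T) i : nth x0 (p ++ s) (size p + i) = nth x0 s i.
Proof. by rewrite -nth_drop drop_size_cat. Qed.

Lemma periodic_on_repeat (p Y q r : seq T) :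
  periodic_on (p ++ Y ++ q ++ Y ++ r) (size Y + size q) (size p) (size p + size Y).
Proof.
move=> k hk; have -> : k = size p + (k - size p) by lia.
have hY : k - size p < size Y by lia.
set m := k - size p.
rewrite -addnA !(nth_cat_size p) addnCA nth_cat_size (addnC m) nth_cat_size.
by rewrite !nth_cat hY.
Qed.

Lemma periodic_on_diff (w : seq T) p d i j :
  periodic_on w p i j -> periodic_on w (p + d) i j -> i + d <= j ->
  periodic_on w d (i + p) (i + p + d).
Proof.
move=> per_p per_pd hd k hk; have hm : i <= k - p < j by lia.
have -> : k = k - p + p by lia.
by rewrite -(per_p _ hm) (per_pd _ hm) addnA.
Qed.

Lemma square_free_drop (Q : seq T) k : square_free Q -> square_free (drop k Q).
Proof.
by move=> sf u Y v E; apply: (sf (take k Q ++ u) Y v); rewrite -catA -E cat_take_drop.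
Qed.

Lemma square_free_periodic (w : seq T) d i :
  square_free w -> 0 < d -> i + 2 * d <= size w -> ~ periodic_on w d i (i + d).
Proof.
move=> sf d_gt0 hw per.
pose Y := take d (drop i w); pose Y' := take d (drop (i + d) w).
have size_Y : size Y = d by rewrite size_take size_drop; case: ltnP; lia.
have size_Y' : size Y' = d by rewrite size_take size_drop; case: ltnP; lia.
have eqY : Y = Y'.
  apply: (eq_from_nth (x0 := x0)) => [|k]; first by rewrite size_Y size_Y'.
  rewrite size_Y => hk; rewrite !nth_take // !nth_drop per; first by congr nth; lia.
  lia.
have decomp : w = take i w ++ Y ++ Y' ++ drop (i + 2 * d) w.
  have -> : i + 2 * d = d + (d + i) by lia.
  rewrite -{1}(cat_take_drop i w) -[drop i w](cat_take_drop d) drop_drop.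
  by rewrite -[drop (d + i) w](cat_take_drop d) drop_drop /Y' (addnC i).
move: decomp; rewrite -eqY => /sf Y_nil.
by move: size_Y; rewrite Y_nil /=; lia.
Qed.

(* A necessary condition for [take (2 * h + 1) w] to be an almost-square; [s] is
   the position of the inserted or deleted letter. *)
Definition almost_square_prefix (w : seq T) (h : nat) : Prop :=
  2 * h + 1 <= size w /\
  exists s t1 t2, [/\ h <= t1 <= h.+1, h <= t2 <= h.+1,
                      periodic_on w t1 0 s & periodic_on w t2 s.+1 h].

Lemma almost_square_take (w : seq T) l :
  l <= size w -> almost_square (take l w) ->
  exists2 h, l = 2 * h + 1 & almost_square_prefix w h.
Proof.
move=> hl [W [W' [uE [[W1 [W2 [x [WE W'E]]]] | [W1 [W2 [x [WE W'E]]]]]]]]; subst W W'.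
all: have size_l := congr1 size uE; rewrite size_takel // !size_cat /= in size_l.
all: rewrite -(cat_take_drop l w) {}uE -!catA /=; move: (drop l w) => rest.
all: exists (size W1 + size W2); first lia.
all: split; first by rewrite !size_cat /= !size_cat; lia.
- (* W1 W2 W1 x W2: shift h on W1, shift h+1 on W2 *)
  have per1 := @periodic_on_repeat [::] W1 W2 (x :: W2 ++ rest).
  have per2 := @periodic_on_repeat W1 W2 (W1 ++ [:: x]) rest.
  rewrite -catA /= size_cat /= in per2.
  exists (size W1), (size W1 + size W2), (size W2 + (size W1 + 1)).
  split; [lia | lia | exact: per1 | exact: periodic_on_sub per2].
- (* W1 x W2 W1 W2: shift h+1 on W1, shift h on W2 *)
  have per1 := @periodic_on_repeat [::] W1 (x :: W2) (W2 ++ rest).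
  have per2 := @periodic_on_repeat (W1 ++ [:: x]) W2 W1 rest.
  rewrite -catA /= size_cat /= in per2.
  exists (size W1), (size W1 + (size W2).+1), (size W2 + size W1).
  split; [lia | lia | exact: per1 | apply: periodic_on_sub per2; lia].
Qed.

Lemma almost_square_prefix_window (w : seq T) h :
  almost_square_prefix w h ->
  exists s, forall i j, j <= h -> j <= s \/ s < i ->
    exists2 t, h <= t <= h.+1 & periodic_on w t i j.
Proof.
move=> [_ [s [t1 [t2 [ht1 ht2 per1 per2]]]]]; exists s => i j hj [hs | hs].
- by exists t1 => //; apply: periodic_on_sub per1.
- by exists t2 => //; apply: periodic_on_sub per2.
Qed.

Lemma almost_square_prefix_gap (w : seq T) a b :
  square_free w -> almost_square_prefix w a -> almost_square_prefix w b ->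
  a + 2 <= b -> 4 * a <= 3 * b + 2.
Proof.
move=> sf ha hb hab; rewrite leqNgt; apply/negP => hlt.
have [sa win_a] := almost_square_prefix_window ha.
have [sb win_b] := almost_square_prefix_window hb.
pose D := b - a + 1.
have hD : 3 * D <= a by lia.
have [i [hi avoid_a avoid_b]] := window_avoiding_two_points sa sb hD.
have [ta hta per_a] := win_a i (i + D) hi avoid_a.
have hib : i + D <= b by lia.
have [tb htb per_b] := win_b i (i + D) hib avoid_b.
have per_ab : periodic_on w (ta + (tb - ta)) i (i + D) by rewrite subnKC //; lia.
apply: (square_free_periodic sf _ _ (periodic_on_diff per_a per_ab _)); have := hb.1; lia.
Qed.

End Periodicity.

Definition gap_growth (s : seq nat) : Prop :=
  {in s &, forall a b, a + 2 <= b -> 5 * a <= 4 * b}.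

Lemma gap_growth_nth (s : seq nat) :
  sorted ltn s -> gap_growth s ->
  forall j, 0 < j < size s -> 5 ^ j.+1 < 4 ^ j.+2 * nth 0 s j ^ 2.
Proof.
move=> s_lt growth.
have nth_lt i j : i < j < size s -> nth 0 s i < nth 0 s j.
  by case/andP=> ij js; apply: (sorted_ltn_nth ltn_trans) => //; rewrite inE; lia.
elim/ltn_ind=> -[|[|[|j]]] IH hj //.
- by have := nth_lt 0 1 hj; nia.
- by have := nth_lt 1 2 hj; nia.
have gap : nth 0 s j.+1 + 2 <= nth 0 s j.+3.
  by have := nth_lt j.+1 j.+2; have := nth_lt j.+2 j.+3; lia.
have j1 : j.+1 < size s by lia.
have j3 : j.+3 < size s by lia.
have := growth _ _ (mem_nth 0 j1) (mem_nth 0 j3) gap.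
have := IH j.+1 (ltnW (ltnSn _)) j1.
rewrite (expnS 5 j.+3) (expnS 5 j.+2) (expnS 4 j.+4) (expnS 4 j.+3).
move: (nth 0 s j.+1) (nth 0 s j.+3) (5 ^ j.+2) (4 ^ j.+3) => x y A B IHx xy.
have : 25 * x ^ 2 <= 16 * y ^ 2 by rewrite -[25]/(5 ^ 2) -[16]/(4 ^ 2) -!expnMn leq_exp2r.
nia.
Qed.

Lemma gap_growth_size (hs : seq nat) n :
  uniq hs -> gap_growth hs ->
  {in hs, forall a, 2 * a + 1 <= n} -> 2 <= n -> 5 ^ size hs < 4 ^ size hs * n ^ 2.
Proof.
move=> hs_uniq growth hs_le n_ge2; rewrite -(size_sort leq); set s := sort leq hs.
have s_lt : sorted ltn s.
  by rewrite ltn_sorted_uniq_leq sort_uniq hs_uniq sort_sorted //; apply: leq_total.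
have s_growth : gap_growth s.
  by move=> a b; rewrite !mem_sort; apply: growth.
case size_s: (size s) => [|[|k]]; [nia | nia |].
have k1 : k.+1 < size s by rewrite size_s.
have := gap_growth_nth s_lt s_growth (j := k.+1) k1.
have : (2 * nth 0 s k.+1 + 1) ^ 2 <= n ^ 2.
  by rewrite leq_exp2r // hs_le // -(mem_sort leq) mem_nth.
rewrite (expnS 4 k.+2); move: (nth 0 s k.+1) (5 ^ k.+2) (4 ^ k.+2) => h A B.
nia.
Qed.

Lemma INR_expn m n : INR (m ^ n) = (INR m ^ n)%R.
Proof. by elim: n => [|n IH] //; rewrite expnS mult_INR IH. Qed.

Lemma log_bound_of_expn_lt k n :
  5 ^ k < 4 ^ k * n ^ 2 -> (INR k < 2 * (ln (INR n) / ln (5 / 4)))%R.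
Proof.
move=> hlt; have n_gt0 : 0 < n by case: n hlt => //; rewrite exp0n // muln0.
move/ltP/lt_INR: hlt; rewrite mult_INR !INR_expn => hlt.
have n_pos : (0 < INR n)%R by apply/lt_0_INR/ltP.
have pow4_pos : (0 < 4 ^ k)%R by apply: pow_lt; lra.
have ln54_pos : (0 < ln (5 / 4))%R by rewrite -ln_1; apply: ln_increasing; lra.
have ratio : ((5 / 4) ^ k < INR n ^ 2)%R.
  apply: (Rmult_lt_reg_r (4 ^ k)) => //.
  rewrite -Rpow_mult_distr (_ : (5 / 4 * 4 = INR 5)%R); last by simpl; lra.
  by rewrite (_ : INR 4 = 4%R) in hlt; [lra | simpl; lra].
have := ln_increasing _ _ (pow_lt _ k (_ : 0 < 5 / 4)%R) ratio.
rewrite !ln_pow //; last lra.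
move=> hln; apply: (Rmult_lt_reg_r (ln (5 / 4))) => //.
rewrite Rmult_assoc Rmult_assoc Rinv_l; simpl in hln; lra.
Qed.

Theorem mainTheorem6 (T : eqType) (Q : seq T) :
  (2 <= size Q)%N -> square_free Q ->
  forall p : nat, (1 <= p <= size Q)%N ->
  forall ls : seq nat, uniq ls ->
    (forall l, l \in ls -> (p.-1 + l <= size Q)%N /\ almost_square (factor_at Q p l)) ->
    (INR (size ls) < 2 * (ln (INR (size Q)) / ln (5/4)))%R.
Proof.
move=> size_Q sf p _ ls ls_uniq hls.
have x0 : T by case: Q size_Q {sf hls} => [|x].
pose w := drop p.-1 Q.
have half_prefix l : l \in ls -> l = 2 * l./2 + 1 /\ almost_square_prefix x0 w l./2.
  move=> /hls [hl sq_l]; have l_le : l <= size w by rewrite size_drop; lia.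
  have [h -> pre_h] := almost_square_take x0 l_le sq_l.
  by have -> : (2 * h + 1)./2 = h by lia.
apply: log_bound_of_expn_lt; rewrite -(size_map half ls); apply: gap_growth_size => //.
- by rewrite map_inj_in_uniq // => l1 l2 /half_prefix[E1 _] /half_prefix[E2 _]; lia.
- move=> _ _ /mapP[l1 /half_prefix[_ h1] ->] /mapP[l2 /half_prefix[_ h2] ->] gap.
  by have := almost_square_prefix_gap (square_free_drop (k := p.-1) sf) h1 h2 gap; lia.
- by move=> _ /mapP[l /[dup] /half_prefix[E _] /hls[hl _] ->]; lia.
Qed.
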